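(* Let $S\subset\mathbb{R}^n$ be a nonempty nearly convex set, let $\varphi\colon\mathbb{R}^n\to\overline{\mathbb{R}}$ be a nearly convex function bounded from below on $S$, and assume $$\mathrm{ri}(\mathrm{dom}\, \varphi)\cap\mathrm{ri}\, S\neq \emptyset.$$ Let $\varepsilon>0$. Then $\bar x\in S$ is an $\varepsilon$-solution of the problem $\inf\{\varphi(x)\mid x\in S\}$ if and only if there exist $\varepsilon_1, \varepsilon_2\geq 0$ with $\varepsilon_1+\varepsilon_2=\varepsilon$ such that $$0\in \partial_{\varepsilon_1}\varphi(\bar x)+ N_{\varepsilon_2}(\bar x; S).$$
   Context: A set $D$ is nearly convex if there is a convex $E$ with $E\subset D\subset\overline{E}$; a function is nearly convex if its epigraph $\{(x,\alpha)\mid\alpha\ge\varphi(x)\}$ is nearly convex; $\mathrm{dom}\,\varphi=\{x\mid\varphi(x)<\infty\}$. $\mathrm{ri}\,D=\{a\in D\mid\exists\delta>0,\ B(a;\delta)\cap\mathrm{aff}\,D\subset D\}$. A point $\bar x\in S$ is an $\varepsilon$-solution of $\inf\{\varphi(x)\mid x\in S\}$ if $\varphi(\bar x)\le\varphi(x)+\varepsilon$ for all $x\in S$. $\partial_\varepsilon\varphi(\bar x)=\{\xi\mid\langle\xi,x-\bar x\rangle-\varepsilon\le\varphi(x)-\varphi(\bar x)\ \forall x\in\mathbb{R}^n\}$ and $N_\varepsilon(\bar x;S)=\{\xi\mid\langle\xi,x-\bar x\rangle\le\varepsilon\ \forall x\in S\}$. *)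

From HB Require Import structures.
From mathcomp Require Import all_boot all_order all_algebra.
From mathcomp Require Import boolp classical_sets reals constructive_ereal.
Set Implicit Arguments. Unset Strict Implicit. Unset Printing Implicit Defensive.
Import Order.TTheory GRing.Theory Num.Theory.
Local Open Scope classical_set_scope.
Local Open Scope ring_scope.

Section Defs.
Variable R : realType.

Definition dotv (k : nat) (u v : 'rV[R]_k) : R := \sum_(i < k) u 0 i * v 0 i.
Definition enorm (k : nat) (u : 'rV[R]_k) : R := Num.sqrt (dotv u u).

Definition eclosure (k : nat) (D : set 'rV[R]_k) : set 'rV[R]_k :=
  [set x | forall e : R, 0 < e -> exists2 y, D y & enorm (x - y) < e].

Definition convex_set (k : nat) (E : set 'rV[R]_k) : Prop :=
  forall x y t, E x -> E y -> 0 <= t -> t <= 1 -> E (t *: x + (1 - t) *: y).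

Definition nearly_convex_set (k : nat) (D : set 'rV[R]_k) : Prop :=
  exists E, convex_set E /\ E `<=` D /\ D `<=` eclosure E.

(* epigraph of phi, as a subset of R^(n+1) = R^n x R *)
Definition epi (n : nat) (phi : 'rV[R]_n -> \bar R) : set 'rV[R]_(n + 1) :=
  [set z | (phi (lsubmx z) <= ((rsubmx z) 0 0)%:E)%E].

Definition nearly_convex_fun (n : nat) (phi : 'rV[R]_n -> \bar R) : Prop :=
  nearly_convex_set (epi phi).

Definition dom (n : nat) (phi : 'rV[R]_n -> \bar R) : set 'rV[R]_n :=
  [set x | (phi x < +oo)%E].

Definition aff (k : nat) (D : set 'rV[R]_k) : set 'rV[R]_k :=
  [set x | exists m (l : 'I_m -> R) (y : 'I_m -> 'rV[R]_k),
     (forall i, D (y i)) /\ \sum_(i < m) l i = 1 /\ x = \sum_(i < m) l i *: y i].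

Definition ri (k : nat) (D : set 'rV[R]_k) : set 'rV[R]_k :=
  [set a | D a /\ exists2 d : R, 0 < d &
     forall x, enorm (x - a) < d -> aff D x -> D x].

Definition bounded_below_on (n : nat) (phi : 'rV[R]_n -> \bar R) (S : set 'rV[R]_n)
  : Prop := exists m : R, forall x, S x -> (m%:E <= phi x)%E.

Definition eps_solution (n : nat) (phi : 'rV[R]_n -> \bar R) (S : set 'rV[R]_n)
  (eps : R) (xbar : 'rV[R]_n) : Prop :=
  S xbar /\ forall x, S x -> (phi xbar <= phi x + eps%:E)%E.

(* eps-subdifferential; empty when phi xbar is not finite (standard convention);
   for finite phi xbar the inequality is
   <xi, x - xbar> - eps <= phi x - phi xbar, rewritten without ereal subtraction *)
Definition eps_subdiff (n : nat) (phi : 'rV[R]_n -> \bar R) (eps : R)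
  (xbar : 'rV[R]_n) : set 'rV[R]_n :=
  [set xi | phi xbar \is a fin_num /\
     forall x, ((dotv xi (x - xbar) - eps + fine (phi xbar))%:E <= phi x)%E].

Definition eps_normal (n : nat) (S : set 'rV[R]_n) (eps : R) (xbar : 'rV[R]_n)
  : set 'rV[R]_n :=
  [set xi | forall x, S x -> dotv xi (x - xbar) <= eps].

End Defs.

(* If xbar is an eps-solution, then phi >= alpha := phi xbar - eps on S.  Take
   convex cores E_S of S and E_phi of epi phi and the convex set G of pairs
   (u, r) with (x, s) in E_phi, x + u in E_S and s <= r: the epigraph of the
   perturbation function u |-> inf {phi x | x + u in S}, where G(0, r) forces
   r >= alpha.  Since ri (dom phi) and ri S meet, G is radial at u = 0 within
   the span L of its projection, so the infimal slope
   q u = inf {(r - alpha) / t | t > 0, G (t u, r)} is a finite sublinear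
   function on L; finite-dimensional Hahn-Banach gives a linear eta <= q, that
   is <eta, y - x> <= phi x - alpha on the cores and, by density, for
   x in dom phi and y in S.  Splitting eps at c = sup_{y in S} <eta, y - xbar>
   yields -eta in the (eps - c)-subdifferential and eta in the c-normal set.
   The converse just adds the two defining inequalities. *)

From HB Require Import structures.
From mathcomp Require Import all_boot all_order all_algebra.
From mathcomp Require Import boolp classical_sets reals constructive_ereal.
From mathcomp Require Import ring lra.
Import Order.TTheory GRing.Theory Num.Theory.
Local Open Scope classical_set_scope.
Local Open Scope ring_scope.
Set Implicit Arguments. Unset Strict Implicit.

Section InnerProduct.
Variables (R : realType) (k : nat).
Implicit Types (a b u v : 'rV[R]_k) (s : R).

Lemma dotvC a u : dotv a u = dotv u a.
Proof. by apply: eq_bigr => i _; rewrite mulrC. Qed.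

Lemma dotvDl a b u : dotv (a + b) u = dotv a u + dotv b u.
Proof. by rewrite /dotv -big_split; apply: eq_bigr => i _; rewrite mxE mulrDl. Qed.

Lemma dotvDr a u v : dotv a (u + v) = dotv a u + dotv a v.
Proof. by rewrite dotvC dotvDl !(dotvC a). Qed.

Lemma dotvZl s a u : dotv (s *: a) u = s * dotv a u.
Proof. by rewrite /dotv mulr_sumr; apply: eq_bigr => i _; rewrite mxE mulrA. Qed.

Lemma dotvZr s a u : dotv a (s *: u) = s * dotv a u.
Proof. by rewrite dotvC dotvZl dotvC. Qed.

Lemma dotvNl a u : dotv (- a) u = - dotv a u.
Proof. by rewrite -scaleN1r dotvZl mulN1r. Qed.

Lemma dotvNr a u : dotv a (- u) = - dotv a u.
Proof. by rewrite dotvC dotvNl dotvC. Qed.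

Lemma dotvBr a u v : dotv a (u - v) = dotv a u - dotv a v.
Proof. by rewrite dotvDr dotvNr. Qed.

Lemma dotv0l u : dotv 0 u = 0.
Proof. by rewrite -(scale0r 0) dotvZl mul0r. Qed.

Lemma dotv0r a : dotv a 0 = 0.
Proof. by rewrite dotvC dotv0l. Qed.

Lemma dotv_deltal (j : 'I_k) u : dotv (delta_mx 0 j) u = u 0 j.
Proof.
rewrite /dotv (bigD1 j) //= big1 => [|i ij]; last by rewrite !mxE (negbTE ij) andbF mul0r.
by rewrite !mxE !eqxx mul1r addr0.
Qed.

Lemma dotv_deltar (j : 'I_k) a : dotv a (delta_mx 0 j) = a 0 j.
Proof. by rewrite dotvC dotv_deltal. Qed.

Lemma dotvv_ge0 u : 0 <= dotv u u.
Proof. by apply: sumr_ge0 => i _; rewrite -expr2 sqr_ge0. Qed.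

Lemma enorm_ge0 u : 0 <= enorm u.
Proof. exact: sqrtr_ge0. Qed.

Lemma enormZ s u : enorm (s *: u) = `|s| * enorm u.
Proof. by rewrite /enorm dotvZl dotvZr mulrA -expr2 sqrtrM ?sqr_ge0 // sqrtr_sqr. Qed.

Lemma coord_le_enorm u i : `|u 0 i| <= enorm u.
Proof.
rewrite /enorm -sqrtr_sqr ler_sqrt ?dotvv_ge0 // /dotv (bigD1 i) //= expr2.
by rewrite lerDl; apply: sumr_ge0 => j _; rewrite -expr2 sqr_ge0.
Qed.

Definition norm1 u : R := \sum_i `|u 0 i|.

Lemma norm1_ge0 u : 0 <= norm1 u.
Proof. exact: sumr_ge0. Qed.

Lemma norm1D u v : norm1 (u + v) <= norm1 u + norm1 v.
Proof. by rewrite /norm1 -big_split; apply: ler_sum => i _; rewrite mxE ler_normD. Qed.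

Lemma norm1Z s u : norm1 (s *: u) = `|s| * norm1 u.
Proof. by rewrite /norm1 mulr_sumr; apply: eq_bigr => i _; rewrite mxE normrM. Qed.

Lemma enorm_le_norm1 u : enorm u <= norm1 u.
Proof.
rewrite /enorm -[norm1 u]ger0_norm ?norm1_ge0 // -sqrtr_sqr ler_sqrt ?sqr_ge0 //.
rewrite /dotv /norm1.
pose K (x y : R) := x <= y ^+ 2 /\ 0 <= y.
suff [] : K (\sum_i u 0 i * u 0 i) (\sum_i `|u 0 i|) by [].
apply: big_rec2 => [|i x y _ [xy y0]]; first by rewrite /K expr0n.
split; last by rewrite addr_ge0.
rewrite -expr2 -real_normK ?num_real //; have := normr_ge0 (u 0 i); nra.
Qed.

Lemma norm_sum_le (f : 'I_k -> R) u :
  `|\sum_i u 0 i * f i| <= (\sum_i `|f i|) * enorm u.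
Proof.
apply: le_trans (ler_norm_sum _ _ _) _; rewrite mulr_suml.
by apply: ler_sum => i _; rewrite normrM mulrC ler_wpM2l ?coord_le_enorm.
Qed.

Lemma norm_dotv_le a u : `|dotv a u| <= norm1 a * enorm u.
Proof.
by rewrite /dotv (eq_bigr (fun i => u 0 i * a 0 i)) ?norm_sum_le // => i _; rewrite mulrC.
Qed.

Lemma norm_mulmx_le m (K : 'M[R]_(k, m)) u j :
  `|(u *m K) 0 j| <= (\sum_i `|K i j|) * enorm u.
Proof. by rewrite mxE norm_sum_le. Qed.

End InnerProduct.

Lemma enorm_lsubmx (R : realType) (k1 k2 : nat) (w : 'rV[R]_(k1 + k2)) :
  enorm (lsubmx w) <= enorm w.
Proof.
rewrite /enorm ler_sqrt ?dotvv_ge0 // /dotv big_split_ord /=.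
under eq_bigr => i _ do rewrite mxE.
by rewrite lerDl; apply: sumr_ge0 => i _; rewrite -expr2 sqr_ge0.
Qed.

Lemma le0_small_bound (R : realType) (a C : R) :
  (forall d, 0 < d -> a <= C * d) -> a <= 0.
Proof.
move=> small; apply/ler_addgt0Pr => e e0; rewrite add0r.
have C1 : 0 < `|C| + 1 by rewrite ltr_pwDr.
set d := e / (`|C| + 1).
have d0 : 0 < d by rewrite divr_gt0.
have dC : d * (`|C| + 1) = e by rewrite divfK ?gt_eqF.
have := small d d0; have := ler_norm C; nra.
Qed.

Section Convexity.
Variables (R : realType) (k : nat) (E : set 'rV[R]_k).
Hypothesis convE : convex_set E.

Lemma convex_segment z a t t' : E z -> E (z + t *: a) ->
  0 < t -> 0 <= t' -> t' <= t -> E (z + t' *: a).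
Proof.
move=> Ez Eza t0 t'0 t't.
have := convE Eza Ez (divr_ge0 t'0 (ltW t0)).
rewrite ler_pdivrMr // mul1r => /(_ t't); congr E.
by apply/rowP => i; rewrite !mxE; field; rewrite gt_eqF.
Qed.

Lemma convex_comb p0 : E p0 ->
  forall m (p : 'I_m -> 'rV[R]_k) (c : 'I_m -> R),
  (forall i, E (p i)) -> (forall i, 0 <= c i) -> \sum_i c i <= 1 ->
  E (p0 + \sum_i c i *: (p i - p0)).
Proof.
move=> Ep0; elim=> [|m IH] p c Ep c0 c1; first by rewrite big_ord0 addr0.
rewrite big_ord_recr /=; rewrite big_ord_recr /= in c1.
set w := widen_ord (leqnSn m) in c1 *; set cm := c ord_max in c1 *.
have cm0 : 0 <= cm by apply: c0.
have s0 : 0 <= \sum_(i < m) c (w i) by apply: sumr_ge0.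
have [cm1|cm1] := eqVneq cm 1.
  have /psumr_eq0P cw0 : \sum_(i < m) c (w i) = 0 by lra.
  rewrite big1 => [|i _]; last by rewrite cw0 // scale0r.
  by rewrite add0r cm1 scale1r addrC subrK.
have cm_lt1 : cm < 1 by rewrite lt_neqAle cm1; lra.
have d0 : 0 < 1 - cm by rewrite subr_gt0.
have Ey : E (p0 + \sum_i (c (w i) / (1 - cm)) *: (p (w i) - p0)).
  apply: IH => [i|i|]; first exact: Ep.
    by rewrite divr_ge0 // ltW.
  by rewrite -mulr_suml ler_pdivrMr // mul1r; lra.
have := convE (Ep ord_max) Ey cm0 (ltW cm_lt1); congr E.
rewrite scalerDr scaler_sumr.
rewrite (eq_bigr (fun i => c (w i) *: (p (w i) - p0))) => [|i _]; last first.
  by rewrite scalerA mulrCA mulfV ?gt_eqF // mulr1.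
rewrite /cm; move: (p ord_max) (c ord_max) (\sum_(i < m) _) => a b s.
by apply/rowP => i; rewrite !mxE; ring.
Qed.

End Convexity.

Lemma affine_basis (R : realType) (k : nat) (E : set 'rV[R]_k) p0 : E p0 ->
  exists m (M : 'M[R]_(m, k)), [/\ row_free M, forall i, E (p0 + row i M) &
    forall e, E e -> (e - p0 <= M)%MS].
Proof.
move=> Ep0.
pose free_in m :=
  `[< exists M : 'M[R]_(m, k), row_free M /\ forall i, E (p0 + row i M) >].
have free0 : exists m, free_in m.
  exists 0%N; apply/asboolP; exists 0; split; last by case.
  by rewrite /row_free mxrank0.
have free_le m : free_in m -> (m <= k)%N.
  by move=> /asboolP [M [fM _]]; rewrite -(eqP fM) rank_leq_col.
have [m /asboolP [M [fM EM]] mmax] := ex_maxnP free0 free_le.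
exists m, M; split => // e Ee; apply/negPn/negP => nsub.
set v := e - p0 in nsub.
have v0 : v != 0 by apply: contraNneq nsub => ->; rewrite sub0mx.
suff /mmax : free_in (m + 1)%N by rewrite addn1 ltnn.
apply/asboolP; exists (col_mx M v); split.
  have ltM : (M < M + v)%MS.
    by rewrite ltmxE addsmxSl; apply: contra nsub; apply: submx_trans (addsmxSr M v).
  have rk_le := leq_of_leqif (mxrank_adds_leqif M v).
  have rk_lt := rank_ltmx ltM.
  rewrite (eqP fM) rank_rV v0 in rk_le rk_lt.
  by rewrite /row_free -(addsmxE M v).1 eqn_leq rk_le addn1.
move=> i; case: (splitP i) => j ij.
  by rewrite (_ : i = lshift 1 j) ?rowKu //; apply: val_inj.
rewrite (_ : i = rshift m j) ?rowKd; last exact: val_inj.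
rewrite (_ : row j v = v); first by rewrite addrC subrK.
by apply/rowP => l; rewrite !mxE ord1.
Qed.

Lemma aff_subset (R : realType) (k : nat) (X Y : set 'rV[R]_k) :
  X `<=` Y -> aff X `<=` aff Y.
Proof. by move=> XY x [m [l [y [Xy Hxy]]]]; exists m, l, y; split => // i; apply: XY. Qed.

Section RelativeInterior.
Variables (R : realType) (k : nat) (E D : set 'rV[R]_k).
Variables (p0 : 'rV[R]_k) (m : nat) (M : 'M[R]_(m, k)).
Hypotheses (convE : convex_set E) (ED : E `<=` D) (DclE : D `<=` eclosure E).
Hypotheses (Ep0 : E p0) (freeM : row_free M) (EM : forall i, E (p0 + row i M)).
Hypothesis spanM : forall e, E e -> (e - p0 <= M)%MS.

Definition in_flat (y : 'rV[R]_k) := (y - p0 <= M)%MS.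

Lemma in_flat_add u x : in_flat u -> (x <= M)%MS -> in_flat (u + x).
Proof. by move=> Mu Mx; rewrite /in_flat addrAC addmx_sub. Qed.

Lemma in_flat_sub u v : in_flat u -> in_flat v -> (u - v <= M)%MS.
Proof.
move=> Mu Mv; rewrite (_ : u - v = (u - p0) + (-1) *: (v - p0)).
  by rewrite addmx_sub // scalemx_sub.
by rewrite scaleN1r opprB addrA subrK.
Qed.

Lemma closure_in_flat x : eclosure E x -> in_flat x.
Proof.
move=> clx; rewrite /in_flat submxE; apply/eqP/rowP => j; rewrite [RHS]mxE.
apply/eqP; rewrite -normr_le0.
apply: (@le0_small_bound _ _ (\sum_i `|cokermx M i j|)) => d d0.
have [e Ee xe] := clx d d0.
have -> : x - p0 = (x - e) + (e - p0) by rewrite addrA subrK.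
rewrite mulmxDl.
have := spanM Ee; rewrite submxE => /eqP ->; rewrite addr0.
by apply: le_trans (norm_mulmx_le _ _ _) _; rewrite ler_wpM2l ?sumr_ge0 ?ltW.
Qed.

Lemma flat_aff y : in_flat y -> aff E y.
Proof.
move=> My; set c := (y - p0) *m pinvmx M.
have cM : c *m M = y - p0 by rewrite mulmxKpV.
exists m.+1, (fun i => if unlift ord0 i is Some j then c 0 j else 1 - \sum_j c 0 j).
exists (fun i => if unlift ord0 i is Some j then p0 + row j M else p0).
split; first by move=> i; case: (unlift ord0 i).
have unlift_lift (i : 'I_m) : unlift (@ord0 m) (lift ord0 i) = Some i by apply: liftK.
split; rewrite big_ord_recl unlift_none.
  by under [X in _ + X]eq_bigr => i _ do rewrite unlift_lift; rewrite subrK.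
under [X in _ = _ + X]eq_bigr => i _ do rewrite unlift_lift scalerDr.
rewrite big_split /= -scaler_suml -mulmx_sum_row cM scalerBl scale1r.
by rewrite addrA subrK addrC subrK.
Qed.

Definition centre := p0 + (const_mx (2 * m.+1%:R)^-1 : 'rV[R]_m) *m M.

Lemma in_flat_centre : in_flat centre.
Proof. by rewrite /in_flat /centre addrC addKr submxMl. Qed.

(* The coordinates of a point of the flat near the centre stay in [0, 1/(m+1)],
   so it is a convex combination of p0 and the points p0 + row i M. *)
Lemma centre_ball : exists2 rho, 0 < rho &
  forall y, in_flat y -> enorm (y - centre) < rho -> E y.
Proof.
set h : R := (2 * m.+1%:R)^-1.
set ch : 'rV[R]_m := const_mx h.
have h0 : 0 < h by rewrite invr_gt0 mulr_gt0 ?ltr0Sn.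
set P := pinvmx M; set C := \sum_j \sum_i `|P i j|.
have C0 : 0 <= C by do 2!apply: sumr_ge0 => ? _.
exists (h / (C + 1)) => [|y My yc]; first by rewrite divr_gt0 ?ltr_pwDr.
set c := (y - p0) *m P.
have cM : c *m M = y - p0 by rewrite mulmxKpV.
have cdec : c = ch + (y - centre) *m P.
  have PM : (ch *m M) *m P = ch.
    by apply: (row_free_inj freeM); rewrite mulmxKpV // submxMl.
  rewrite /c -PM -mulmxDl; congr (_ *m P).
  by apply/rowP => i; rewrite /centre !mxE; ring.
have cj j : 0 <= c 0 j <= 2 * h.
  have : `|((y - centre) *m P) 0 j| <= h.
    apply: le_trans (norm_mulmx_le _ _ _) _.
    have CjC : \sum_i `|P i j| <= C.
      by rewrite /C (bigD1 j) //= lerDl; do 2!apply: sumr_ge0 => ? _.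
    have := enorm_ge0 (y - centre); have : 0 <= \sum_i `|P i j| by apply: sumr_ge0.
    move: yc; rewrite ltr_pdivlMr ?ltr_pwDr //; nra.
  by rewrite cdec !mxE ler_norml => /andP [? ?]; apply/andP; split; lra.
have -> : y = p0 + \sum_j c 0 j *: ((p0 + row j M) - p0).
  under eq_bigr => j _ do rewrite addrC addKr.
  by rewrite -mulmx_sum_row cM addrC subrK.
apply: convex_comb => // [j|]; first by case/andP: (cj j).
apply: le_trans (_ : \sum_(j < m) 2 * h <= 1).
  by apply: ler_sum => j _; case/andP: (cj j).
rewrite sumr_const card_ord -(mulr_natr (2 * h)) /h mulrAC.
by rewrite ler_pdivrMr ?mulr_gt0 ?ltr0Sn // mul1r ler_wpM2l // ler_nat.
Qed.

Lemma ri_radial z d : D z -> 0 < d ->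
    (forall x, enorm (x - z) < d -> aff D x -> D x) ->
  forall a, (a <= M)%MS -> exists2 t, 0 < t & E (z + t *: a).
Proof.
move=> Dz d0 riz a Ma.
have [rho rho0 ball] := centre_ball; set b := centre.
have Mz : in_flat z by apply: closure_in_flat; apply: DclE.
set N := norm1 (z - b) + norm1 a + d.
have N0 : 0 < N by rewrite ltr_wpDl // addr_ge0 ?norm1_ge0.
set s := d / (4 * N).
have s0 : 0 < s by rewrite divr_gt0 ?mulr_gt0.
have sN : s * N = d / 4 by rewrite /s; field; rewrite gt_eqF.
exists s => //.
set y := z + s *: a; set w := y + s *: (y - b).
have My : in_flat y by rewrite in_flat_add // scalemx_sub.
have Mw : in_flat w.
  by rewrite in_flat_add // scalemx_sub // in_flat_sub // in_flat_centre.
(* Overshoot: [w] lies in D by relative openness at z; approximating it by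
   w' in E writes y as a convex combination of w' and a point b' near b. *)
have wz : enorm (w - z) < d.
  rewrite (_ : w - z = s *: a + s *: ((z - b) + s *: a)); last first.
    by apply/rowP => i; rewrite /w /y !mxE; ring.
  apply: le_lt_trans (enorm_le_norm1 _) _; apply: le_lt_trans (norm1D _ _) _.
  have := norm1D (z - b) (s *: a); rewrite !norm1Z (gtr0_norm s0).
  have nzb := norm1_ge0 (z - b); have na := norm1_ge0 a.
  have s_le : s <= 1 by rewrite ler_pdivrMr ?mulr_gt0 // mul1r /N; lra.
  move: sN; rewrite /N; nra.
have [w' Ew' ww'] := DclE (riz w wz (aff_subset ED (flat_aff Mw))) (mulr_gt0 rho0 s0).
set b' := b + s^-1 *: (w - w').
have Eb' : E b'.
  have Mw' : in_flat w' by apply/closure_in_flat/DclE/ED.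
  apply: ball; first by rewrite in_flat_add ?in_flat_centre // scalemx_sub // in_flat_sub.
  by rewrite /b' addrC addKr enormZ gtr0_norm ?invr_gt0 // ltr_pdivrMl // mulrC.
have l0 : 0 <= (1 + s)^-1 by rewrite invr_ge0 addr_ge0 ?ltW.
have l1 : (1 + s)^-1 <= 1 by rewrite invf_le1 ?lerDl ?ltW // ltr_wpDr ?ltW.
have := convE Ew' Eb' l0 l1; congr E.
apply/rowP => i; rewrite /b' /w /y !mxE; field; rewrite gt_eqF //; lra.
Qed.

End RelativeInterior.

Lemma ri_nearly_convex_radial (R : realType) (k : nat) (E D : set 'rV[R]_k) z :
    convex_set E -> E `<=` D -> D `<=` eclosure E -> ri D z ->
  exists m (M : 'M[R]_(m, k)), (forall e, D e -> (e - z <= M)%MS) /\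
    forall a, (a <= M)%MS -> exists2 t, 0 < t &
      forall t', 0 <= t' -> t' <= t -> E (z + t' *: a).
Proof.
move=> convE ED DclE [Dz [d d0 riz]].
have [p0 Ep0 _] := DclE z Dz 1 ltr01.
have [m [M [freeM EM spanM]]] := affine_basis Ep0.
have radial := ri_radial convE ED DclE Ep0 freeM EM spanM Dz d0 riz.
exists m, M; split=> [e De|a Ma].
  by apply: in_flat_sub; apply/(closure_in_flat spanM)/DclE.
have Ez : E z by have [t _] := radial 0 (sub0mx 1 M); rewrite scaler0 addr0.
have [t t0 Eza] := radial a Ma.
by exists t => // t' t'0 t't; apply: (convex_segment convE Ez Eza).
Qed.

Section HahnBanach.
Variables (R : realType) (k : nat) (p : 'rV[R]_k -> R).
Hypotheses (pD : forall u v, p (u + v) <= p u + p v)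
  (pZ : forall s u, 0 < s -> s * p u <= p (s *: u)) (p0 : 0 <= p 0).

Definition supported_below (j : nat) (u : 'rV[R]_k) :=
  forall i : 'I_k, (j <= i)%N -> u 0 i = 0.

(* The new coordinate [c] is the supremum of the lower estimates forced by
   sublinearity. *)
Lemma sublinear_minorant_step j (jk : (j < k)%N) (eta : 'rV[R]_k) :
    (forall u, supported_below j u -> dotv eta u <= p u) ->
  exists eta', forall u, supported_below j.+1 u -> dotv eta' u <= p u.
Proof.
move=> etap; set ej : 'rV[R]_k := delta_mx 0 (Ordinal jk).
have suppD u v : supported_below j u -> supported_below j v -> supported_below j (u + v).
  by move=> su sv i ji; rewrite mxE su ?sv ?addr0.
have suppZ s u : supported_below j u -> supported_below j (s *: u).
  by move=> su i ji; rewrite mxE su ?mulr0.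
have supp0 : supported_below j 0 by move=> i _; rewrite mxE.
have lower_upper u v : supported_below j u -> supported_below j v ->
    dotv eta v - p (v - ej) <= p (u + ej) - dotv eta u.
  move=> su sv; have := etap _ (suppD _ _ su sv); have := pD (v - ej) (u + ej).
  by rewrite addrCA subrK dotvDr; lra.
set lower := [set dotv eta v - p (v - ej) | v in supported_below j].
have lower_sup : has_sup lower.
  split; first by exists (dotv eta 0 - p (0 - ej)), 0.
  by exists (p (0 + ej) - dotv eta 0) => x [v sv <-]; apply: lower_upper.
set c := sup lower.
have c_lower v : supported_below j v -> dotv eta v - p (v - ej) <= c.
  by move=> sv; apply: sup_upper_bound => //; exists v.
have c_upper u : supported_below j u -> c <= p (u + ej) - dotv eta u.
  by move=> su; apply: ge_sup => [|x [v sv <-]]; [case: lower_sup|apply: lower_upper].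
exists (eta + (c - eta 0 (Ordinal jk)) *: ej) => u su.
set s := u 0 (Ordinal jk); set v := u - s *: ej.
have sv : supported_below j v.
  move=> i ji; rewrite !mxE; have [->|nij] := eqVneq i (Ordinal jk).
    by rewrite eqxx mulr1 subrr.
  rewrite andbF mulr0 subr0; apply: su; rewrite ltn_neqAle ji andbT.
  by apply: contra nij => /eqP ij; apply/eqP/val_inj.
have uv : u = v + s *: ej by rewrite subrK.
have -> : dotv (eta + (c - eta 0 (Ordinal jk)) *: ej) u = dotv eta v + c * s.
  by rewrite dotvDl dotvZl dotv_deltal -/s {1}uv dotvDr dotvZr dotv_deltar; ring.
clearbody v s.
have [s_lt0|s_gt0|s0] := ltgtP s 0.
- have t0 : 0 < - s by rewrite oppr_gt0.
  have := c_lower _ (suppZ (- s)^-1 _ sv); rewrite dotvZr => cl.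
  have := pZ (((- s)^-1 *: v) - ej) t0.
  rewrite scalerBr scalerA mulfV ?gt_eqF // scale1r scaleNr opprK -uv.
  have := ler_pM2l t0 (((- s)^-1 * dotv eta v) - p ((- s)^-1 *: v - ej)) c.
  rewrite cl mulrBr mulrA mulfV ?gt_eqF // mul1r; nra.
- have := c_upper _ (suppZ s^-1 _ sv); rewrite dotvZr => cu.
  have := pZ (s^-1 *: v + ej) s_gt0.
  rewrite scalerDr scalerA mulfV ?gt_eqF // scale1r -uv.
  have := ler_pM2l s_gt0 c (p (s^-1 *: v + ej) - s^-1 * dotv eta v).
  rewrite cu mulrBr mulrA mulfV ?gt_eqF // mul1r; nra.
- by rewrite uv s0 mulr0 !addr0 scale0r addr0; apply: etap.
Qed.

Lemma sublinear_minorant : exists eta : 'rV[R]_k, forall u, dotv eta u <= p u.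
Proof.
have : forall j, (j <= k)%N ->
    exists eta, forall u, supported_below j u -> dotv eta u <= p u.
  elim=> [_|j IH jk].
    exists 0 => u su; rewrite dotv0l (_ : u = 0) //.
    by apply/rowP => i; rewrite su // mxE.
  by have [eta etap] := IH (ltnW jk); apply: sublinear_minorant_step etap.
move=> /(_ k (leqnn k)) [eta etap]; exists eta => u.
by apply: etap => i; rewrite leqNgt ltn_ord.
Qed.

End HahnBanach.

Section PerturbationSeparation.
Variables (R : realType) (n : nat) (G : 'rV[R]_n -> R -> Prop) (alpha : R).
Variable L : 'M[R]_n.
Hypothesis G_convex : forall u1 u2 r1 r2 t, G u1 r1 -> G u2 r2 -> 0 <= t -> t <= 1 ->
  G (t *: u1 + (1 - t) *: u2) (t * r1 + (1 - t) * r2).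
Hypothesis G0_ge : forall r, G 0 r -> alpha <= r.
Hypothesis G_sub : forall u r, G u r -> (u <= L)%MS.
Hypothesis G_radial : forall u, (u <= L)%MS -> exists t r, 0 < t /\ G (t *: u) r.

Definition slopes (u : 'rV[R]_n) : set R :=
  [set x | exists t r, [/\ 0 < t, G (t *: u) r & x = (r - alpha) / t]].

Lemma slopes_of_G u r : G u r -> slopes u (r - alpha).
Proof. by move=> Gur; exists 1, r; rewrite scale1r divr1. Qed.

Lemma slopes_neq0 u : (u <= L)%MS -> slopes u !=set0.
Proof. by move=> /G_radial [t [r [t0 Gr]]]; exists ((r - alpha) / t), t, r. Qed.

Lemma slopes0_ge0 a : slopes 0 a -> 0 <= a.
Proof.
move=> [t [r [t0 Gr ->]]]; rewrite scaler0 in Gr.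
by rewrite divr_ge0 ?subr_ge0 ?G0_ge // ltW.
Qed.

Lemma slopesD u v a b : slopes u a -> slopes v b -> slopes (u + v) (a + b).
Proof.
move=> [t [r [t0 Gr ->]]] [t' [r' [t'0 Gr' ->]]].
have tt'0 : 0 < t + t' by rewrite addr_gt0.
set lam := t' / (t + t').
have l0 : 0 <= lam by rewrite divr_ge0 ?ltW.
have l1 : lam <= 1 by rewrite ler_pdivrMr // mul1r lerDr ltW.
have := G_convex Gr Gr' l0 l1.
have -> : lam *: (t *: u) + (1 - lam) *: (t' *: v) = (t * t' / (t + t')) *: (u + v).
  by apply/rowP => i; rewrite !mxE /lam; field; rewrite gt_eqF.
move=> Gc; exists (t * t' / (t + t')), (lam * r + (1 - lam) * r').
split=> //; first by rewrite divr_gt0 ?mulr_gt0.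
by rewrite /lam; field; rewrite !gt_eqF.
Qed.

Lemma slopesN_ge0 u a b : slopes u a -> slopes (- u) b -> 0 <= a + b.
Proof. by move=> Sa Sb; apply: slopes0_ge0; rewrite -(subrr u); apply: slopesD. Qed.

Lemma slopesZ u s b : 0 < s -> slopes (s *: u) b -> slopes u (b / s).
Proof.
move=> s0 [t [r [t0 Gr ->]]]; exists (t * s), r.
by rewrite mulr_gt0 // -scalerA invfM mulrA.
Qed.

Let inf_slope u := inf (slopes u).

Lemma slopes_lbound u : (u <= L)%MS -> has_lbound (slopes u).
Proof.
move=> uL; have [b Sb] : slopes (- u) !=set0.
  by apply: slopes_neq0; rewrite -scaleN1r scalemx_sub.
by exists (- b) => a Sa; have := slopesN_ge0 Sa Sb; lra.
Qed.

Lemma inf_slope_le u a : (u <= L)%MS -> slopes u a -> inf_slope u <= a.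
Proof. by move=> uL Sa; apply: ge_inf (slopes_lbound uL) _ Sa. Qed.

Lemma inf_slope_ge u c :
  (u <= L)%MS -> (forall a, slopes u a -> c <= a) -> c <= inf_slope u.
Proof. by move=> uL; apply: lb_le_inf (slopes_neq0 uL). Qed.

Lemma inf_slopeD u v : (u <= L)%MS -> (v <= L)%MS ->
  inf_slope (u + v) <= inf_slope u + inf_slope v.
Proof.
move=> uL vL; have uvL := addmx_sub uL vL.
suff : inf_slope (u + v) - inf_slope u <= inf_slope v by lra.
apply: inf_slope_ge => // b Sb; suff : inf_slope (u + v) - b <= inf_slope u by lra.
apply: inf_slope_ge => // a Sa; have := inf_slope_le uvL (slopesD Sa Sb); lra.
Qed.

Lemma inf_slopeZ s u : 0 < s -> (u <= L)%MS -> s * inf_slope u <= inf_slope (s *: u).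
Proof.
move=> s0 uL; apply: inf_slope_ge => [|b Sb]; first exact: scalemx_sub.
by have := inf_slope_le uL (slopesZ s0 Sb); rewrite ler_pdivlMr // mulrC.
Qed.

(* [inf_slope] is sublinear on L only; composing it with a projection onto L makes it
   sublinear on the whole space, so that Hahn-Banach applies. *)
Lemma perturbation_separation :
  exists eta : 'rV[R]_n, forall u r, G u r -> dotv eta u <= r - alpha.
Proof.
set P := proj_mx L (L^C)%MS.
have PL u : (u *m P <= L)%MS by apply: proj_mx_sub.
have P_id u : (u <= L)%MS -> u *m P = u.
  by move=> uL; apply: proj_mx_id => //; apply: capmx_compl.
pose p u := inf_slope (u *m P).
have pD u v : p (u + v) <= p u + p v by rewrite /p mulmxDl inf_slopeD.
have pZ s u : 0 < s -> s * p u <= p (s *: u).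
  by move=> s0; rewrite /p -scalemxAl inf_slopeZ.
have p0 : 0 <= p 0.
  by rewrite /p mul0mx; apply: inf_slope_ge => //; [apply: sub0mx | apply: slopes0_ge0].
have [eta etap] := sublinear_minorant pD pZ p0.
exists eta => u r Gur; apply: le_trans (etap u) _.
have uL := G_sub Gur.
by rewrite /p P_id //; apply: inf_slope_le (slopes_of_G Gur).
Qed.

End PerturbationSeparation.

Section EpigraphSeparation.
Variables (R : realType) (n : nat) (S : set 'rV[R]_n) (phi : 'rV[R]_n -> \bar R).
Hypothesis phiN : forall x, phi x != -oo%E.
Variables (ES : set 'rV[R]_n) (Ep : set 'rV[R]_(n + 1)).
Hypotheses (convES : convex_set ES) (ES_S : ES `<=` S) (S_clES : S `<=` eclosure ES).
Hypotheses (convEp : convex_set Ep) (Ep_epi : Ep `<=` epi phi).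
Hypothesis epi_clEp : epi phi `<=` eclosure Ep.

Lemma dom_fin_num x : dom phi x -> phi x \is a fin_num.
Proof. by rewrite /dom /= ltey => xoo; rewrite fin_numE phiN. Qed.

Lemma pinfty_or_dom x : phi x = +oo%E \/ dom phi x.
Proof. by rewrite /dom /= ltey; case: eqP; [left | right]. Qed.

Lemma epi_graph x : dom phi x -> epi phi (row_mx x (const_mx (fine (phi x)) : 'rV_1)).
Proof.
move=> /dom_fin_num/fineK phix; rewrite /epi /=.
by rewrite (row_mxKl x) (row_mxKr x) mxE phix.
Qed.

Lemma epi_dom w : epi phi w -> dom phi (lsubmx w).
Proof. by rewrite /epi /dom /= => /le_lt_trans; apply; rewrite ltey. Qed.

Definition dom_core := [set lsubmx w | w in Ep].

Lemma convex_dom_core : convex_set dom_core.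
Proof.
move=> _ _ t [w1 Ew1 <-] [w2 Ew2 <-] t0 t1.
by exists (t *: w1 + (1 - t) *: w2); [apply: convEp | rewrite linearD !linearZ].
Qed.

Lemma dom_core_dom : dom_core `<=` dom phi.
Proof. by move=> _ [w Ew <-]; apply/epi_dom/Ep_epi. Qed.

Lemma dom_cl_dom_core : dom phi `<=` eclosure dom_core.
Proof.
move=> x domx e e0; have [w Ew xw] := epi_clEp (epi_graph domx) e0.
exists (lsubmx w); first by exists w.
rewrite -[x in x - _](row_mxKl x (const_mx (fine (phi x)) : 'rV_1)) -linearB.
exact: le_lt_trans (enorm_lsubmx _) xw.
Qed.

(* Epigraph of the perturbation function u |-> inf {phi x | x + u \in S},
   built from the convex cores. *)
Definition perturbed_epi (u : 'rV[R]_n) (r : R) :=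
  exists w, [/\ Ep w, ES (u + lsubmx w) & rsubmx w 0 0 <= r].

Lemma perturbed_epi_convex u1 u2 r1 r2 t :
  perturbed_epi u1 r1 -> perturbed_epi u2 r2 -> 0 <= t -> t <= 1 ->
  perturbed_epi (t *: u1 + (1 - t) *: u2) (t * r1 + (1 - t) * r2).
Proof.
move=> [w1 [Ew1 ES1 wr1]] [w2 [Ew2 ES2 wr2]] t0 t1.
exists (t *: w1 + (1 - t) *: w2); split; first exact: convEp.
  have := convES ES1 ES2 t0 t1; congr ES.
  by apply/rowP => i; rewrite !mxE; ring.
by move: wr1 wr2; rewrite !mxE; nra.
Qed.

Section Qualification.
Variables (z : 'rV[R]_n) (mS mF : nat) (MS : 'M[R]_(mS, n)) (MF : 'M[R]_(mF, n)).
Hypotheses (S_MS : forall e, S e -> (e - z <= MS)%MS)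
  (dom_MF : forall e, dom phi e -> (e - z <= MF)%MS).
Hypotheses (radS : forall a, (a <= MS)%MS -> exists2 t, 0 < t &
    forall t', 0 <= t' -> t' <= t -> ES (z + t' *: a))
  (radF : forall a, (a <= MF)%MS -> exists2 t, 0 < t &
    forall t', 0 <= t' -> t' <= t -> dom_core (z + t' *: a)).

Lemma perturbed_epi_sub u r : perturbed_epi u r -> (u <= MS + MF)%MS.
Proof.
move=> [w [Ew ESw _]].
have -> : u = (u + lsubmx w - z) + (-1) *: (lsubmx w - z).
  by rewrite scaleN1r opprB addrA subrK addrK.
apply: addmx_sub; first by apply: submx_trans (addsmxSl MS MF); apply/S_MS/ES_S.
apply/scalemx_sub/submx_trans/(addsmxSr MS MF).
by apply/dom_MF/dom_core_dom; exists w.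
Qed.

Lemma perturbed_epi_radial u :
  (u <= MS + MF)%MS -> exists t r, 0 < t /\ perturbed_epi (t *: u) r.
Proof.
move=> /sub_addsmxP [v ->]; set a := v.1 *m MS; set b := v.2 *m MF.
have [t1 t1_gt0 ESt] := radS (submxMl v.1 MS).
have [t2 t2_gt0 Ft] : exists2 t, 0 < t &
    forall t', 0 <= t' -> t' <= t -> dom_core (z + t' *: - b).
  by apply: radF; rewrite -scaleN1r scalemx_sub // submxMl.
set t := Order.min t1 t2.
have t0 : 0 < t by rewrite lt_min t1_gt0.
have tt1 : t <= t1 by rewrite ge_min lexx.
have tt2 : t <= t2 by rewrite ge_min lexx orbT.
have [w Ew wb] := Ft t (ltW t0) tt2.
exists t, (rsubmx w 0 0); split => //; exists w; split => //.
have := ESt t (ltW t0) tt1; congr ES.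
by rewrite wb; apply/rowP => i; rewrite !mxE; ring.
Qed.

End Qualification.

Lemma separator_closure (eta : 'rV[R]_n) alpha :
    (forall w y, Ep w -> ES y -> dotv eta (y - lsubmx w) <= rsubmx w 0 0 - alpha) ->
  forall x y, dom phi x -> S y -> dotv eta (y - x) <= fine (phi x) - alpha.
Proof.
move=> sep x y domx Sy; set r := fine (phi x).
set gx := row_mx x (const_mx r : 'rV_1).
rewrite -subr_le0; apply: (@le0_small_bound _ _ (2 * norm1 eta + 1)) => d d0.
have [y' ESy' yy'] := S_clES Sy d0.
have [w Ew gw] := epi_clEp (epi_graph domx) d0.
have dist_y : `|dotv eta (y - y')| <= norm1 eta * d.
  by apply: le_trans (norm_dotv_le _ _) _; rewrite ler_wpM2l ?norm1_ge0 ?ltW.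
have dist_x : `|dotv eta (x - lsubmx w)| <= norm1 eta * d.
  have -> : x - lsubmx w = lsubmx (gx - w) by rewrite linearB /= row_mxKl.
  apply: le_trans (norm_dotv_le _ _) _; rewrite ler_wpM2l ?norm1_ge0 //.
  exact/ltW/(le_lt_trans (enorm_lsubmx _) gw).
have dist_r : `|r - rsubmx w 0 0| <= d.
  have -> : r - rsubmx w 0 0 = (gx - w) 0 (rshift n 0).
    by rewrite /gx !mxE (unsplitK (inr _)) /= mxE.
  exact/ltW/(le_lt_trans (coord_le_enorm _ _) gw).
have := sep _ _ Ew ESy'.
have -> : dotv eta (y - x) =
    dotv eta (y' - lsubmx w) + dotv eta (y - y') - dotv eta (x - lsubmx w).
  by rewrite !dotvBr; ring.
move: dist_y dist_x dist_r; rewrite !ler_norml => /andP [? ?] /andP [? ?] /andP [? ?].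
lra.
Qed.


Lemma core_separation z alpha : ri (dom phi) z -> ri S z ->
    (forall w, Ep w -> ES (lsubmx w) -> alpha <= rsubmx w 0 0) ->
  exists eta, forall x y, dom phi x -> S y -> dotv eta (y - x) <= fine (phi x) - alpha.
Proof.
move=> riF riS alpha_le.
have [mS [MS [S_MS radS]]] := ri_nearly_convex_radial convES ES_S S_clES riS.
have [mF [MF [F_MF radF]]] :=
  ri_nearly_convex_radial convex_dom_core dom_core_dom dom_cl_dom_core riF.
have G0 r : perturbed_epi 0 r -> alpha <= r.
  by move=> [w [Ew ESw wr]]; rewrite add0r in ESw; apply: le_trans (alpha_le w Ew ESw) wr.
have [eta etaG] := perturbation_separation perturbed_epi_convex G0
  (perturbed_epi_sub S_MS F_MF) (perturbed_epi_radial radS radF).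
exists eta; apply: separator_closure => w y Ew ESy.
by apply: etaG; exists w; rewrite subrK.
Qed.

End EpigraphSeparation.

Section EpsSolution.
Variables (R : realType) (n : nat) (S : set 'rV[R]_n) (phi : 'rV[R]_n -> \bar R).
Variables (eps : R) (xbar : 'rV[R]_n).
Hypothesis phiN : forall x, phi x != -oo%E.

Lemma subdiff_normal_of_separator (eta : 'rV[R]_n) :
    S xbar -> phi xbar \is a fin_num ->
    (forall x y, dom phi x -> S y ->
      dotv eta (y - x) <= fine (phi x) - (fine (phi xbar) - eps)) ->
  exists e1 e2 : R, [/\ 0 <= e1, 0 <= e2, e1 + e2 = eps &
    exists xi1 xi2, [/\ eps_subdiff phi e1 xbar xi1,
                        eps_normal S e2 xbar xi2 & xi1 + xi2 = 0]].
Proof.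
move=> Sxbar finxbar sep.
have domxbar : dom phi xbar by move: finxbar; rewrite /dom /= ltey fin_numE => /andP[].
set T := [set dotv eta (y - xbar) | y in S].
have T_sup : has_sup T.
  split; first by exists (dotv eta (xbar - xbar)), xbar.
  by exists eps => _ [y Sy <-]; have := sep _ _ domxbar Sy; lra.
set c := sup T.
have c_ub y : S y -> dotv eta (y - xbar) <= c.
  by move=> Sy; apply: sup_upper_bound => //; exists y.
have c_ge0 : 0 <= c by have := c_ub _ Sxbar; rewrite subrr dotv0r.
have c_le_eps : c <= eps.
  by apply: ge_sup => [|_ [y Sy <-]]; [case: T_sup | have := sep _ _ domxbar Sy; lra].
exists (eps - c), c; split; rewrite ?subr_ge0 ?subrK //.
exists (- eta), eta; split; [split => // x | exact: c_ub | exact: addNr].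
have [->|domx] := pinfty_or_dom phi x; first by rewrite leey.
rewrite -(fineK (dom_fin_num phiN domx)) lee_fin dotvNl.
suff : c <= fine (phi x) - (fine (phi xbar) - eps) + dotv eta (x - xbar) by lra.
apply: ge_sup => [|_ [y Sy <-]]; first by case: T_sup.
have -> : y - xbar = (y - x) + (x - xbar) by rewrite addrA subrK.
by rewrite dotvDr; have := sep _ _ domx Sy; lra.
Qed.

Lemma eps_solution_subdiff_normal :
    nearly_convex_set S -> nearly_convex_fun phi -> (ri (dom phi) `&` ri S) !=set0 ->
    eps_solution phi S eps xbar ->
  exists e1 e2 : R, [/\ 0 <= e1, 0 <= e2, e1 + e2 = eps &
    exists xi1 xi2, [/\ eps_subdiff phi e1 xbar xi1,
                        eps_normal S e2 xbar xi2 & xi1 + xi2 = 0]].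
Proof.
move=> [ES [convES [ES_S S_clES]]] [Ep [convEp [Ep_epi epi_clEp]]] [z [riF riS]].
move=> [Sxbar solxbar].
have finxbar : phi xbar \is a fin_num.
  apply: (dom_fin_num phiN); apply: le_lt_trans (solxbar z riS.1) _.
  by apply: lte_add_pinfty; [exact: riF.1 | rewrite ltey].
have [eta sep] : exists eta, forall x y, dom phi x -> S y ->
    dotv eta (y - x) <= fine (phi x) - (fine (phi xbar) - eps).
  apply: (core_separation phiN convES ES_S S_clES convEp Ep_epi epi_clEp riF riS).
  move=> w Ew ESw; have := solxbar _ (ES_S _ ESw); have := Ep_epi _ Ew; rewrite /epi /=.
  move=> /(leeD2r eps%:E) /[swap] /le_trans /[apply].
  by rewrite -(fineK finxbar) -EFinD lee_fin; lra.
exact: subdiff_normal_of_separator Sxbar finxbar sep.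
Qed.

Lemma subdiff_normal_eps_solution : S xbar ->
    (exists e1 e2 : R, [/\ 0 <= e1, 0 <= e2, e1 + e2 = eps &
      exists xi1 xi2, [/\ eps_subdiff phi e1 xbar xi1,
                          eps_normal S e2 xbar xi2 & xi1 + xi2 = 0]]) ->
  eps_solution phi S eps xbar.
Proof.
move=> Sxbar [e1 [e2 [_ _ e12 [xi1 [xi2 [[finxbar subxi1] normxi2 xi12]]]]]].
split => // x Sx; have := subxi1 x; have := normxi2 x Sx.
rewrite (_ : xi2 = - xi1) ?dotvNl; last by apply/eqP; rewrite -addr_eq0 addrC xi12.
have [->|domx] := pinfty_or_dom phi x; first by rewrite addye ?leey.
rewrite -(fineK (dom_fin_num phiN domx)) -(fineK finxbar) -EFinD !lee_fin; lra.
Qed.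

End EpsSolution.

Theorem mainTheorem8 (R : realType) (n : nat) (S : set 'rV[R]_n)
  (phi : 'rV[R]_n -> \bar R) (eps : R) (xbar : 'rV[R]_n) :
  (forall x, phi x != -oo%E) ->
  S !=set0 ->
  nearly_convex_set S ->
  nearly_convex_fun phi ->
  bounded_below_on phi S ->
  (ri (dom phi) `&` ri S) !=set0 ->
  0 < eps ->
  S xbar ->
  (eps_solution phi S eps xbar <->
   exists e1 e2 : R, [/\ 0 <= e1, 0 <= e2, e1 + e2 = eps &
     exists xi1 xi2, [/\ eps_subdiff phi e1 xbar xi1,
                         eps_normal S e2 xbar xi2 & xi1 + xi2 = 0]]).
Proof.
move=> phiN _ ncS ncphi _ qualif _ Sxbar; split.
  exact: eps_solution_subdiff_normal.
exact: subdiff_normal_eps_solution.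
Qed.
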